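(* Let $W\in\mathbb{R}^{m\times n}$ have columns $w_1,\dots,w_n$, all nonzero, let $F:=WW^\top$ and $r:=\operatorname{rank}(W)=\operatorname{rank}(F)$. Define leverage scores $\ell_i:=w_i^\top F^+w_i$, fractional dimensionalities $D_i:=\|w_i\|^4/(w_i^\top Fw_i)$, and relative slack $\sigma_i:=1-D_i/\ell_i\in[0,1]$. Then: (1) $\sum_{i=1}^n\ell_i=r$; (2) $D_i\le\ell_i$ for all $i$, with equality iff the spectral measure $\mu_i$ is a Dirac mass, equivalently iff $w_i$ is an eigenvector of $F$; (3) $r-\sum_{i=1}^nD_i=\sum_{i=1}^n(\ell_i-D_i)=\sum_{i=1}^n\ell_i\sigma_i$; in particular, if $r=m$ then $m-\sum_iD_i=\sum_i\ell_i\sigma_i$.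
   Context: $F^+$ is the Moore–Penrose pseudoinverse of $F$. Writing $F=\sum_{k:\lambda_k>0}\lambda_kP_k$ on $\operatorname{Im}(F)$ with $P_k$ the orthogonal projectors onto the eigenspaces for distinct positive eigenvalues $\lambda_k$, the spectral measure of $w_i$ is $\mu_i:=\sum_{k}\frac{\|P_kw_i\|^2}{\|w_i\|^2}\delta_{\lambda_k}$. *)

From HB Require Import structures.
From mathcomp Require Import all_boot all_order all_algebra.
From mathcomp Require Import reals.
Set Implicit Arguments. Unset Strict Implicit. Unset Printing Implicit Defensive.
Import Order.TTheory GRing.Theory Num.Theory.
Local Open Scope ring_scope.

Section Defs.
Variable R : realType.

Definition dotc m (u v : 'cV[R]_m) : R := (u^T *m v) 0 0.

(* Moore-Penrose pseudoinverse: X is THE pseudoinverse of A iff it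
   satisfies the four Penrose equations (it exists and is unique). *)
Definition is_MP_pinv m n (A : 'M[R]_(m, n)) (X : 'M[R]_(n, m)) : Prop :=
  [/\ A *m X *m A = A, X *m A *m X = X,
      (A *m X)^T = A *m X & (X *m A)^T = X *m A].

(* Orthogonal projector onto the (row) space spanned by the rows of E:
   with B := row_base E (row-free), P = B^T (B B^T)^{-1} B.  P is symmetric,
   so it is also the orthogonal projector onto the same subspace of column
   vectors. *)
Definition oproj n (E : 'M[R]_n) : 'M[R]_n :=
  (row_base E)^T *m invmx (row_base E *m (row_base E)^T) *m row_base E.

(* Spectral measure of w w.r.t. symmetric F, as a finitely supported point-mass
   function on R: mu({lam}) = ||P_lam w||^2/||w||^2 for each positive
   eigenvalue lam of F (P_lam = orthogonal projector on its eigenspace),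
   and 0 elsewhere. *)
Definition spec_meas m (F : 'M[R]_m) (w : 'cV[R]_m) (lam : R) : R :=
  if (0 < lam) && eigenvalue F lam then
    dotc (oproj (eigenspace F lam) *m w) (oproj (eigenspace F lam) *m w)
      / dotc w w
  else 0.

Definition is_dirac (mu : R -> R) : Prop :=
  exists lam0 : R, forall lam, mu lam = (lam == lam0)%:R.

End Defs.

From HB Require Import structures.
From mathcomp Require Import all_boot all_order all_algebra.
From mathcomp Require Import reals.
From mathcomp Require Import ring zify.
Set Implicit Arguments. Unset Strict Implicit. Unset Printing Implicit Defensive.
Import Order.TTheory GRing.Theory Num.Theory.
Local Open Scope ring_scope.

(* For a column w of W put a := W^T w and b := W^T F^+ w.  As w lies in the
   range of F = W W^T, F F^+ w = w, whence <a,a> = w^T F w, <a,b> = |w|^2 and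
   <b,b> = w^T F^+ w = ell.  So D = <a,b>^2 / <a,a> <= <b,b> = ell is
   Cauchy-Schwarz, with equality iff b is proportional to a, i.e. iff w = W b
   is proportional to W a = F w.  The spectral measure of an eigenvector is the
   Dirac mass at its eigenvalue because the eigenspaces of the symmetric F are
   orthogonal, and conversely full mass at one eigenvalue puts w in that
   eigenspace.  Finally sum_i ell_i = tr (W^T F^+ W) = tr (F^+ F), the trace of
   an idempotent of rank r. *)

Section GeneralizedInverse.
Variable K : fieldType.

Lemma full_rank_factor_idem n r (C : 'M[K]_(n, r)) (B : 'M[K]_(r, n)) :
  row_full C -> row_free B -> C *m B *m (C *m B) = C *m B -> B *m C = 1%:M.
Proof.
move=> /row_fullP[L LC] freeB CBCB; apply: (row_free_inj freeB); rewrite mul1mx.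
by have := congr1 (mulmx L) CBCB; rewrite !mulmxA LC !mul1mx.
Qed.

Lemma mxtrace_idem n (Q : 'M[K]_n) : Q *m Q = Q -> \tr Q = (\rank Q)%:R.
Proof.
move=> QQ; have QE := mulmx_base Q.
have BC := full_rank_factor_idem (col_base_full Q) (row_base_free Q).
by rewrite -{1}QE mxtrace_mulC BC ?mxtrace1 // QE.
Qed.

Lemma mxrank_ginvM m n (A : 'M[K]_(m, n)) (X : 'M[K]_(n, m)) :
  A *m X *m A = A -> \rank (X *m A) = \rank A.
Proof.
move=> AXA; apply/eqP; rewrite eqn_leq mxrankM_maxr /=.
by rewrite -{1}AXA -mulmxA mxrankM_maxr.
Qed.

Lemma mxtrace_ginvM m n (A : 'M[K]_(m, n)) (X : 'M[K]_(n, m)) :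
  A *m X *m A = A -> \tr (X *m A) = (\rank A)%:R.
Proof.
move=> AXA; rewrite mxtrace_idem ?mxrank_ginvM //.
by rewrite mulmxA -(mulmxA X A X) -(mulmxA X) AXA.
Qed.

End GeneralizedInverse.

Lemma col_mulmx (S : pzSemiRingType) m n p (A : 'M[S]_(m, n)) (B : 'M[S]_(n, p)) i :
  col i (A *m B) = A *m col i B.
Proof. by apply/matrixP=> a b; rewrite !mxE; apply: eq_bigr => k _; rewrite !mxE. Qed.

Section EuclideanInnerProduct.
Variable R : realType.

Lemma dotcE k (u v : 'cV[R]_k) : dotc u v = \sum_i u i 0 * v i 0.
Proof. by rewrite /dotc mxE; apply: eq_bigr => i _; rewrite mxE. Qed.

Lemma dotcC k (u v : 'cV[R]_k) : dotc u v = dotc v u.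
Proof. by rewrite !dotcE; apply: eq_bigr => i _; rewrite mulrC. Qed.

Lemma dotc_col k m n (A : 'M[R]_(k, m)) (B : 'M[R]_(k, n)) i j :
  dotc (col i A) (col j B) = (A^T *m B) i j.
Proof. by rewrite dotcE mxE; apply: eq_bigr => l _; rewrite !mxE. Qed.

Lemma dotc_mulmxl k l (A : 'M[R]_(l, k)) (u : 'cV[R]_k) (v : 'cV[R]_l) :
  dotc (A *m u) v = dotc u (A^T *m v).
Proof. by rewrite /dotc trmx_mul mulmxA. Qed.

Lemma dotc_mulmxr k l (A : 'M[R]_(k, l)) (u : 'cV[R]_k) (v : 'cV[R]_l) :
  dotc u (A *m v) = dotc (A^T *m u) v.
Proof. by rewrite dotc_mulmxl trmxK. Qed.

Lemma dotc0r k (u : 'cV[R]_k) : dotc u (0 : 'cV_k) = 0.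
Proof. by rewrite /dotc mulmx0 mxE. Qed.

Lemma dotcBl k (u v w : 'cV[R]_k) : dotc (u - v) w = dotc u w - dotc v w.
Proof. by rewrite !dotcE -sumrB; apply: eq_bigr => i _; rewrite !mxE mulrBl. Qed.

Lemma dotcBr k (u v w : 'cV[R]_k) : dotc w (u - v) = dotc w u - dotc w v.
Proof. by rewrite dotcC dotcBl !(dotcC w). Qed.

Lemma dotcZl k a (u v : 'cV[R]_k) : dotc (a *: u) v = a * dotc u v.
Proof. by rewrite !dotcE mulr_sumr; apply: eq_bigr => i _; rewrite !mxE mulrA. Qed.

Lemma dotcZr k a (u v : 'cV[R]_k) : dotc u (a *: v) = a * dotc u v.
Proof. by rewrite dotcC dotcZl dotcC. Qed.

Lemma dotc_ge0 k (u : 'cV[R]_k) : 0 <= dotc u u.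
Proof. by rewrite dotcE sumr_ge0 // => i _; rewrite -expr2 sqr_ge0. Qed.

Lemma dotc_eq0 k (u : 'cV[R]_k) : (dotc u u == 0) = (u == 0).
Proof.
apply/idP/eqP => [|->]; last by rewrite dotc0r.
rewrite dotcE psumr_eq0 => [/allP u0|i _]; last by rewrite -expr2 sqr_ge0.
apply/matrixP => i j; rewrite (ord1 j) mxE.
by have /implyP/(_ isT) := u0 i (mem_index_enum i); rewrite mulf_eq0 orbb => /eqP.
Qed.

Lemma dotc_gt0 k (u : 'cV[R]_k) : (0 < dotc u u) = (u != 0).
Proof. by rewrite lt_def dotc_eq0 dotc_ge0 andbT. Qed.

Lemma dotc_sub_proj k (u v : 'cV[R]_k) : dotc u u != 0 ->
  let t := dotc u v / dotc u u in
  dotc (v - t *: u) (v - t *: u) = dotc v v - dotc u v ^+ 2 / dotc u u.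
Proof.
by move=> uu0 t; rewrite !dotcBl !dotcBr !dotcZl !dotcZr (dotcC v u) /t; field.
Qed.

Lemma cauchy_schwarz k (u v : 'cV[R]_k) : dotc u v ^+ 2 <= dotc u u * dotc v v.
Proof.
have [->|u0] := eqVneq u 0; first by rewrite dotcC !dotc0r expr0n mul0r.
have uu_gt0 : 0 < dotc u u by rewrite dotc_gt0.
have := dotc_ge0 (v - (dotc u v / dotc u u) *: u).
by rewrite dotc_sub_proj ?gt_eqF // subr_ge0 ler_pdivrMr // mulrC.
Qed.

Lemma cauchy_schwarz_eq k (u v : 'cV[R]_k) : dotc u u != 0 ->
  dotc u v ^+ 2 = dotc u u * dotc v v -> v = (dotc u v / dotc u u) *: u.
Proof.
move=> uu0 CSeq; apply/eqP; rewrite -subr_eq0 -dotc_eq0.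
by rewrite dotc_sub_proj // CSeq mulrC mulKf // subrr.
Qed.

Lemma mulmx_trmx_eq0 m n (A : 'M[R]_(m, n)) : A *m A^T = 0 -> A = 0.
Proof.
move=> AAT0; apply/matrixP => i j.
have /eqP : dotc (col i A^T) (col i A^T) = 0 by rewrite dotc_col trmxK AAT0 mxE.
by rewrite dotc_eq0 => /eqP/matrixP/(_ j 0); rewrite !mxE.
Qed.

Lemma dotc_gram m n (A : 'M[R]_(m, n)) (u : 'cV[R]_m) :
  dotc u (A *m A^T *m u) = dotc (A^T *m u) (A^T *m u).
Proof. by rewrite -mulmxA dotc_mulmxr. Qed.

Lemma mxrank_gram m n (A : 'M[R]_(m, n)) : \rank (A *m A^T) = \rank A.
Proof.
have kerE : (kermx (A *m A^T) == kermx A)%MS.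
  apply/andP; split; apply/sub_kermxP; last first.
    by rewrite mulmxA (sub_kermxP (submx_refl _)) mul0mx.
  apply: mulmx_trmx_eq0.
  by rewrite trmx_mul mulmxA -(mulmxA _ A) (sub_kermxP (submx_refl _)) mul0mx.
have := eqmx_rank kerE; rewrite !mxrank_ker.
have := rank_leq_row A; have := rank_leq_row (A *m A^T); lia.
Qed.

End EuclideanInnerProduct.

Section OrthogonalProjector.
Variables (R : realType) (k : nat) (E : 'M[R]_k).

Lemma oproj_sym : (oproj E)^T = oproj E.
Proof.
(* Generalizing [row_base E] keeps the rewrites from unfolding it. *)
rewrite /oproj; move: (row_base E) => B.
by rewrite !trmx_mul trmxK trmx_inv trmx_mul trmxK mulmxA.
Qed.

Lemma oproj_trmx_id : oproj E *m (row_base E)^T = (row_base E)^T.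
Proof.
have : row_base E *m (row_base E)^T \in unitmx.
  by rewrite -row_free_unit /row_free mxrank_gram; exact: row_base_free.
rewrite /oproj; move: (row_base E) => B BBT_unit.
by rewrite -!mulmxA (mulVmx BBT_unit) mulmx1.
Qed.

Lemma oproj_idem : oproj E *m oproj E = oproj E.
Proof.
by rewrite {2}/oproj (mulmxA _ _ (row_base E)) (mulmxA _ (row_base E)^T) oproj_trmx_id.
Qed.

Lemma oproj_id (x : 'cV[R]_k) : (x^T <= E)%MS -> oproj E *m x = x.
Proof.
rewrite -(eq_row_base E) => /submxP[D xD].
by rewrite -[x]trmxK xD trmx_mul mulmxA oproj_trmx_id.
Qed.

Lemma oproj_ker (x : 'cV[R]_k) : row_base E *m x = 0 -> oproj E *m x = 0.
Proof. by move=> Bx0; rewrite /oproj -(mulmxA _ (row_base E)) Bx0 mulmx0. Qed.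

Lemma dotc_oproj (x : 'cV[R]_k) :
  dotc (oproj E *m x) (oproj E *m x) = dotc x (oproj E *m x).
Proof. by rewrite dotc_mulmxl oproj_sym mulmxA oproj_idem. Qed.

End OrthogonalProjector.

Section SpectralMeasure.
Variables (R : realType) (k : nat) (F : 'M[R]_k).
Hypothesis F_sym : F^T = F.

Lemma mulmx_oproj_eigenspace a :
  F *m oproj (eigenspace F a) = a *: oproj (eigenspace F a).
Proof.
(* Stated for any B because F occurs in the type of [row_base (eigenspace F a)]. *)
have eigen_rows_trmx r (B : 'M_(r, k)) : B *m F = a *: B -> F *m B^T = a *: B^T.
  by move=> BF; rewrite -[F]F_sym -trmx_mul BF linearZ.
have BF : row_base (eigenspace F a) *m F = a *: row_base (eigenspace F a).
  by apply/eigenspaceP; rewrite eq_row_base.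
rewrite /oproj (mulmxA F _ (row_base _)) (mulmxA F) eigen_rows_trmx //.
by rewrite -!scalemxAl.
Qed.

Lemma spec_meas_eigenvector (w : 'cV[R]_k) lam :
  w != 0 -> 0 < lam -> F *m w = lam *: w ->
  forall l, spec_meas F w l = (l == lam)%:R.
Proof.
move=> w0 lam_gt0 Fw l; rewrite /spec_meas.
have [->|l_neq] := eqVneq l lam.
  have wF : w^T *m F = lam *: w^T by rewrite -{1}F_sym -trmx_mul Fw linearZ.
  have lam_eig : eigenvalue F lam by apply/eigenvalueP; exists w^T; rewrite ?trmx_eq0.
  by rewrite lam_gt0 lam_eig oproj_id ?divff ?dotc_eq0 //; apply/eigenspaceP.
case: ifP => // /andP[_ _]; set B := row_base (eigenspace F l).
have BF : B *m F = l *: B by apply/eigenspaceP; rewrite eq_row_base.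
have Bw0 : B *m w = 0.
  have : (lam - l) *: (B *m w) = 0.
    by rewrite scalerBl scalemxAr -Fw mulmxA BF -scalemxAl subrr.
  by move/eqP; rewrite scaler_eq0 subr_eq0 eq_sym (negbTE l_neq) => /eqP.
by rewrite oproj_ker // dotc0r mul0r.
Qed.

Lemma spec_meas_eq1 (w : 'cV[R]_k) lam :
  w != 0 -> spec_meas F w lam = 1 -> F *m w = lam *: w.
Proof.
move=> w0; rewrite /spec_meas; case: ifP => _; last by move/eqP; rewrite eq_sym oner_eq0.
set P := oproj _ => mass1.
have ww0 : dotc w w != 0 by rewrite dotc_eq0.
have PwPw : dotc (P *m w) (P *m w) = dotc w w by rewrite -[LHS](divfK ww0) mass1 mul1r.
have Pw : P *m w = w.
  apply/eqP; rewrite -subr_eq0 -dotc_eq0.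
  by rewrite !dotcBl !dotcBr (dotcC (P *m w) w) /P -dotc_oproj -/P PwPw !subrr.
by rewrite -Pw mulmxA mulmx_oproj_eigenspace -scalemxAl.
Qed.

Lemma is_dirac_spec_measP (w : 'cV[R]_k) : 0 < dotc w (F *m w) ->
  is_dirac (spec_meas F w) <-> exists lam, F *m w = lam *: w.
Proof.
move=> wFw_gt0; have w0 : w != 0.
  by apply: contraTneq wFw_gt0 => ->; rewrite dotcC !dotc0r ltxx.
split=> [[lam dirac]|[lam Fw]].
  by exists lam; apply: spec_meas_eq1 w0 _; rewrite dirac eqxx.
have lam_gt0 : 0 < lam.
  by move: wFw_gt0; rewrite Fw dotcZr pmulr_lgt0 // dotc_gt0.
by exists lam; apply: spec_meas_eigenvector.
Qed.

End SpectralMeasure.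

Definition leverage (R : realType) m (Fp : 'M[R]_m) (w : 'cV[R]_m) : R :=
  dotc w (Fp *m w).

Definition frac_dim (R : realType) m (F : 'M[R]_m) (w : 'cV[R]_m) : R :=
  dotc w w ^+ 2 / dotc w (F *m w).

Section Leverage.
Variables (R : realType) (m n : nat) (W : 'M[R]_(m, n)) (Fp : 'M[R]_m).
Local Notation F := (W *m W^T).

Lemma gram_sym : F^T = F.
Proof. by rewrite trmx_mul trmxK. Qed.

Section RangeVector.
Variable w : 'cV[R]_m.
Hypotheses (w_range : F *m (Fp *m w) = w) (w_neq0 : w != 0).

Let a := W^T *m w.
Let b := W^T *m (Fp *m w).

Let gram_form_coord : dotc w (F *m w) = dotc a a.
Proof. exact: dotc_gram. Qed.

Let norm_coord : dotc w w = dotc a b.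
Proof. by rewrite -{2}w_range -mulmxA dotc_mulmxr. Qed.

Let leverage_coord : leverage Fp w = dotc b b.
Proof. by rewrite /leverage -{1}w_range -mulmxA dotc_mulmxl. Qed.

Let frac_dim_coord : frac_dim F w = dotc a b ^+ 2 / dotc a a.
Proof. by rewrite /frac_dim gram_form_coord norm_coord. Qed.

Lemma gram_form_gt0 : 0 < dotc w (F *m w).
Proof.
rewrite gram_form_coord dotc_gt0; apply: contra_neq w_neq0 => a0.
by apply/eqP; rewrite -dotc_eq0 norm_coord a0 dotcC dotc0r.
Qed.

Lemma frac_dim_le_leverage : frac_dim F w <= leverage Fp w.
Proof.
have aa_gt0 : 0 < dotc a a by rewrite -gram_form_coord gram_form_gt0.
by rewrite frac_dim_coord leverage_coord ler_pdivrMr // mulrC cauchy_schwarz.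
Qed.

Lemma frac_dim_gt0 : 0 < frac_dim F w.
Proof. by rewrite /frac_dim divr_gt0 ?gram_form_gt0 // exprn_gt0 // dotc_gt0. Qed.

Lemma leverage_gt0 : 0 < leverage Fp w.
Proof. exact: lt_le_trans frac_dim_gt0 frac_dim_le_leverage. Qed.

Lemma frac_dim_eq_leverageP :
  frac_dim F w = leverage Fp w <-> exists lam, F *m w = lam *: w.
Proof.
have aa0 : dotc a a != 0 by rewrite -gram_form_coord gt_eqF ?gram_form_gt0.
rewrite frac_dim_coord leverage_coord; split=> [CSeq|[lam Fw]].
  have /cauchy_schwarz_eq : dotc a b ^+ 2 = dotc a a * dotc b b.
    by rewrite -CSeq mulrC divfK.
  move=> /(_ aa0); set t := _ / _ => b_eq.
  have t0 : t != 0 by rewrite mulf_neq0 ?invr_eq0 // -norm_coord dotc_eq0.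
  have Wb : W *m b = w by rewrite /b mulmxA w_range.
  exists t^-1; rewrite -[in RHS]Wb b_eq -scalemxAr scalerA mulVf // scale1r.
  by rewrite /a mulmxA.
have lam0 : lam != 0.
  by apply: contraTneq gram_form_gt0 => lam0; rewrite Fw lam0 scale0r dotc0r ltxx.
have b_eq : b = lam^-1 *: a.
  apply/eqP; rewrite -subr_eq0 scalemxAr -mulmxBr -dotc_eq0 -dotc_gram.
  by rewrite mulmxBr w_range -scalemxAr Fw scalerA mulVf // scale1r subrr dotc0r.
by rewrite b_eq !dotcZr !dotcZl; field; rewrite lam0 aa0.
Qed.

End RangeVector.

Hypothesis Fp_pinv : is_MP_pinv F Fp.

Lemma gram_pinv_mulmx : F *m Fp *m W = W.
Proof.
case: Fp_pinv => PF _ P_sym _; set P := F *m Fp in PF P_sym *.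
have FPt : F *m P^T = F by rewrite -{1}gram_sym -trmx_mul PF gram_sym.
apply/eqP; rewrite -subr_eq0; apply/eqP; apply: mulmx_trmx_eq0.
rewrite linearB /= trmx_mul mulmxBl !mulmxBr !mulmxA -!(mulmxA P W) PF FPt.
by rewrite !subrr.
Qed.

Lemma gram_pinv_col i : F *m (Fp *m col i W) = col i W.
Proof. by rewrite mulmxA -col_mulmx gram_pinv_mulmx. Qed.

Lemma sum_leverage : \sum_(i < n) leverage Fp (col i W) = (\rank W)%:R.
Proof.
transitivity (\tr (W^T *m (Fp *m W))).
  by apply: eq_bigr => i _; rewrite /leverage -col_mulmx dotc_col.
have [FFpF _ _ _] := Fp_pinv.
by rewrite mxtrace_mulC -mulmxA mxtrace_ginvM // mxrank_gram.
Qed.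

End Leverage.

Theorem mainTheorem17 (R : realType) (m n : nat) (W : 'M[R]_(m, n))
    (Fp : 'M[R]_m) :
  (forall i : 'I_n, col i W != 0) ->
  is_MP_pinv (W *m W^T) Fp ->
  let F := W *m W^T in
  let r := \rank W in
  let ell := fun i : 'I_n => dotc (col i W) (Fp *m col i W) in
  let D := fun i : 'I_n =>
    (dotc (col i W) (col i W)) ^+ 2 / dotc (col i W) (F *m col i W) in
  let sigma := fun i : 'I_n => 1 - D i / ell i in
  \rank F = r /\
  (forall i : 'I_n, 0 <= sigma i <= 1) /\
  (* (1) *)
  \sum_(i < n) ell i = r%:R /\
  (* (2) *)
  (forall i : 'I_n,
     D i <= ell i /\
     (D i = ell i <-> is_dirac (spec_meas F (col i W))) /\
     (is_dirac (spec_meas F (col i W)) <->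
        exists lam : R, F *m col i W = lam *: col i W)) /\
  (* (3) *)
  (r%:R - \sum_(i < n) D i = \sum_(i < n) (ell i - D i) /\
   \sum_(i < n) (ell i - D i) = \sum_(i < n) ell i * sigma i) /\
  (r = m -> m%:R - \sum_(i < n) D i = \sum_(i < n) ell i * sigma i).
Proof.
move=> W_col0 Fp_pinv F r ell D sigma.
have col_range := gram_pinv_col Fp_pinv.
have ell_gt0 i : 0 < ell i := leverage_gt0 (col_range i) (W_col0 i).
have D_le_ell i : D i <= ell i := frac_dim_le_leverage (col_range i) (W_col0 i).
have sum_ell : \sum_(i < n) ell i = r%:R := sum_leverage Fp_pinv.
have sum_slack : \sum_(i < n) (ell i - D i) = \sum_(i < n) ell i * sigma i.
  by apply: eq_bigr => i _; rewrite mulrBr mulr1 mulrCA mulfV ?mulr1 ?gt_eqF.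
split; first exact: mxrank_gram.
split.
  move=> i; have D_gt0 := frac_dim_gt0 (col_range i) (W_col0 i).
  by rewrite subr_ge0 ler_pdivrMr // mul1r D_le_ell gerBl divr_ge0 ?ltW.
split; first exact: sum_ell.
split.
  move=> i; split; first exact: D_le_ell.
  rewrite (is_dirac_spec_measP (gram_sym W) (gram_form_gt0 (col_range i) (W_col0 i))).
  by split; first exact: frac_dim_eq_leverageP.
have sum_gap : r%:R - \sum_(i < n) D i = \sum_(i < n) (ell i - D i).
  by rewrite sumrB sum_ell.
split; first by split; [exact: sum_gap | exact: sum_slack].
by move=> rm; rewrite -rm sum_gap sum_slack.
Qed.
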